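(* Let $A$ be a deterministic KAT automaton over $(\Sigma,T_0)$ and $\mathfrak{t}:T_0\to\mathsf{BA}(T_1)$. Then $L(\mathsf{compose}_{\mathfrak{t}}(A))=\mathrm{apply}_{\mathfrak{t}}(L(A))$.
   Context: Atoms $\mathsf{At}_T=2^T$; $\mathsf{BA}(T)$ Boolean expressions over $T$; $\alpha\le b$ means $b$ holds under the assignment making exactly the tests in $\alpha$ true. Guarded strings: words in $\mathsf{At}_T(\Sigma\mathsf{At}_T)^*$. Deterministic KAT automaton over $(\Sigma,T)$: $A=(Q,\delta,\iota)$, $Q$ finite, $\delta:Q\times\mathsf{At}_T\to\{\mathsf{accept},\mathsf{reject}\}+\Sigma\times Q$, $\iota:\mathsf{At}_T\to\{\mathsf{accept},\mathsf{reject}\}+\Sigma\times Q$. $L_A(\gamma)$ is the smallest set with $\gamma(\alpha)=\mathsf{accept}\Rightarrow\alpha\in L_A(\gamma)$ and $\gamma(\alpha)=(p,q)$, $w\in L_A(\delta(q,-))\Rightarrow\alpha pw\in L_A(\gamma)$; $L(A)=L_A(\iota)$. $\mathsf{compose}_{\mathfrak{t}}(A)$ for $A=(Q,\delta,\iota)$ over $(\Sigma,T_0)$: for $\beta\in\mathsf{At}_{T_1}$ let $\mathfrak{t}^{-1}(\beta)\in\mathsf{At}_{T_0}$ be the atom with $t\in\mathfrak{t}^{-1}(\beta)$ iff $\beta\le\mathfrak{t}(t)$; then $\mathsf{compose}_{\mathfrak{t}}(A)=(Q,\delta',\iota')$ over $(\Sigma,T_1)$ with $\delta'(q,\beta)=\delta(q,\mathfrak{t}^{-1}(\beta))$,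 $\iota'(\beta)=\iota(\mathfrak{t}^{-1}(\beta))$. $\beta\in\mathsf{At}_{T_1}$ is $\mathfrak{t}$-consistent with $\alpha\in\mathsf{At}_{T_0}$ if for all $t\in T_0$, $\alpha\le t$ iff $\beta\le\mathfrak{t}(t)$. For a guarded language $L$ over $(\Sigma,T_0)$, $\mathrm{apply}_{\mathfrak{t}}(L)$ is the set of guarded strings $\beta_0p_0\beta_1\cdots p_{n-1}\beta_n$ over $(\Sigma,T_1)$ such that some $\alpha_0p_0\alpha_1\cdots p_{n-1}\alpha_n\in L$ has each $\beta_i$ $\mathfrak{t}$-consistent with $\alpha_i$. *)

From mathcomp Require Import all_boot.
Set Implicit Arguments. Unset Strict Implicit. Unset Printing Implicit Defensive.

Inductive BA (T : Type) : Type :=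
| BFalse | BTrue | BTest of T | BNot of BA T | BAnd of BA T & BA T | BOr of BA T & BA T.
Arguments BFalse {T}. Arguments BTrue {T}.

(* Atoms At_T = 2^T : an atom is the set of tests that are true *)
Definition atom (T : finType) := {set T}.

(* alpha <= b : b holds under the assignment making exactly the tests in alpha true *)
Fixpoint atom_le (T : finType) (a : atom T) (b : BA T) : bool :=
  match b with
  | BFalse => false
  | BTrue => true
  | BTest t => t \in a
  | BNot b => ~~ atom_le a b
  | BAnd b c => atom_le a b && atom_le a c
  | BOr b c => atom_le a b || atom_le a c
  end.

(* Guarded strings alpha_0 p_0 alpha_1 ... p_{n-1} alpha_n as (alpha_0, [(p_0,alpha_1);...]) *)
Definition gstring (S T : finType) := (atom T * seq (S * atom T))%type.
Definition glang (S T : finType) := gstring S T -> Prop.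

Inductive res (S Q : Type) := Accept | Reject | Step of S & Q.
Arguments Accept {S Q}. Arguments Reject {S Q}.

Record KATaut (S T : finType) := KATAut {
  kstate : finType;
  kdelta : kstate -> atom T -> res S kstate;
  kinit  : atom T -> res S kstate }.

Inductive LA (S T : finType) (A : KATaut S T) : (atom T -> res S (kstate A)) -> gstring S T -> Prop :=
| LA_acc (gam : atom T -> res S (kstate A)) (a : atom T) :
    gam a = Accept -> @LA S T A gam (a, [::])
| LA_step (gam : atom T -> res S (kstate A)) (a : atom T) (p : S) (q : kstate A)
    (w : gstring S T) :
    gam a = Step p q -> @LA S T A (@kdelta S T A q) w -> @LA S T A gam (a, (p, w.1) :: w.2).

Definition Lang (S T : finType) (A : KATaut S T) : glang S T := @LA S T A (@kinit S T A).

Definition tinv (T0 T1 : finType) (tt : T0 -> BA T1) (b : atom T1) : atom T0 :=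
  [set t | atom_le b (tt t)].

Definition compose (S T0 T1 : finType) (tt : T0 -> BA T1) (A : KATaut S T0) : KATaut S T1 :=
  @KATAut S T1 (kstate A) (fun q b => @kdelta S T0 A q (tinv tt b)) (fun b => @kinit S T0 A (tinv tt b)).

Definition consistent (T0 T1 : finType) (tt : T0 -> BA T1) (b : atom T1) (a : atom T0) : bool :=
  [forall t, (t \in a) == atom_le b (tt t)].

Definition apply_t (S T0 T1 : finType) (tt : T0 -> BA T1) (L : glang S T0) : glang S T1 :=
  fun g => exists g0 : gstring S T0, L g0 /\ consistent tt g.1 g0.1 /\
    all2 (fun x y => (x.1 == y.1) && consistent tt x.2 y.2) g.2 g0.2.

From mathcomp Require Import all_boot.

Set Implicit Arguments.
Unset Strict Implicit.

(* A guard beta is t-consistent with exactly one atom, namely t^-1(beta). Hence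
   apply_t L is the preimage of L under the letterwise map t^-1 on guarded
   strings, and compose_t(A) reads beta exactly as A reads t^-1(beta), so its
   language is the same preimage of L(A). *)

Section LanguageUnfolding.
Variables (S T : finType) (A : KATaut S T).

Lemma LA_nilE gam a : @LA _ _ A gam (a, [::]) <-> gam a = Accept.
Proof. by split => [H|/LA_acc//]; inversion H. Qed.

Lemma LA_consE gam a p b s :
  @LA _ _ A gam (a, (p, b) :: s) <->
  exists2 q, gam a = Step p q & @LA _ _ A (kdelta q) (b, s).
Proof.
split => [H|[q Hq Hw]]; last exact: (LA_step Hq Hw).
inversion H as [|? ? ? q w Hq Hw]; subst.
by exists q; case: w Hw {H}.
Qed.

End LanguageUnfolding.

Section Compose.
Variables (S T0 T1 : finType) (tt : T0 -> BA T1).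

Definition tinv_gstring (g : gstring S T1) : gstring S T0 :=
  (tinv tt g.1, map (fun x => (x.1, tinv tt x.2)) g.2).

Lemma consistent_tinv b a : consistent tt b a = (a == tinv tt b).
Proof.
apply/forallP/eqP => [H|->]; last by move=> t; rewrite inE.
by apply/setP => t; rewrite inE; apply/eqP.
Qed.

Lemma all2_consistent_tinv (s : seq (S * atom T1)) s0 :
  all2 (fun x y => (x.1 == y.1) && consistent tt x.2 y.2) s s0 =
  (map (fun x => (x.1, tinv tt x.2)) s == s0).
Proof.
elim: s s0 => [|[p b] s IH] [|[q a] s0] //=.
by rewrite IH consistent_tinv -[_ :: _ == _ :: _]/((_ == _) && _) xpair_eqE (eq_sym a).
Qed.

Lemma apply_tE (L : glang S T0) g : apply_t tt L g <-> L (tinv_gstring g).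
Proof.
split => [[g0 [Lg0 []]]|Lg].
  rewrite consistent_tinv all2_consistent_tinv => /eqP Eb /eqP Es.
  suff -> : tinv_gstring g = g0 by [].
  by case: g0 {Lg0} Eb Es => ? ? /= -> <-.
exists (tinv_gstring g); split=> //.
by rewrite consistent_tinv all2_consistent_tinv !eqxx.
Qed.

Lemma LA_compose (A : KATaut S T0) gam g :
  @LA _ _ (compose tt A) (fun b => gam (tinv tt b)) g <-> @LA _ _ A gam (tinv_gstring g).
Proof.
case: g => a s; elim: s a gam => [|[p b] s IH] a gam /=.
  by split=> /LA_nilE acc; apply/LA_nilE.
by split=> /LA_consE[q Hq Hw]; apply/LA_consE; exists q => //; apply/IH.
Qed.

End Compose.

Theorem proposition6p6 (S T0 T1 : finType) (A : KATaut S T0) (tt : T0 -> BA T1) :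
  forall g : gstring S T1, Lang (compose tt A) g <-> apply_t tt (Lang A) g.
Proof.
move=> g; apply: iff_trans (iff_sym (@apply_tE _ _ _ tt (Lang A) g)).
exact: (@LA_compose _ _ _ tt A (kinit A) g).
Qed.
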